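(* For every $n\ge1$, the following map is a bijection from $\mathrm{PST}_n$ to $\mathcal A_n$: given $t\in\mathrm{PST}_n$, delete every middle edge of $t$, delete the root of $t$ together with all edges from the root to its children, discard the isolated vertex that was the rightmost leaf of $t$, and label the remaining $n$ leaves of $t$ by $1,\dots,n$ from left to right. (The resulting components, each rooted at its topmost vertex, are binary trees forming an element of $\mathcal A_n$.)
   Context: A reduced plane tree is a rooted plane tree in which every internal node has at least two children; its weight is its number of leaves minus 1. A reduced plane tree with at least two leaves is prime if the rightmost child of its root is a leaf; $\mathrm{PST}_n$ is the set of prime reduced plane trees of weight $n$ (so with $n+1$ leaves). A middle edge of a tree is an edge from an internal vertex $v$ to a child of $v$ which is neither the leftmost nor the rightmost child of $v$. A binary tree is a plane rooted tree whose internal nodes all have exactly two children (a single leaf is allowed). A noncrossing arrangement of binary trees on $[n]$ is a set of binary trees whose leaves are labeled by $1,\dots,n$, each label used exactly once, with the leaves of each tree labeled increasingly from left to right, such that the canonical drawing (leaves placed at the points $1,\dots,n$ of a line, trees drawn above it) has no crossing, i.e. the sets of leaf labels of the trees form a noncrossing partition of $[n]$. $\mathcal A_n$ denotes the set of such arrangements. *)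

From HB Require Import structures.
From mathcomp Require Import all_boot.
Set Implicit Arguments. Unset Strict Implicit. Unset Printing Implicit Defensive.

Inductive tree := Leaf | Node of seq tree.

Fixpoint reduced (t : tree) : bool :=
  match t with
  | Leaf => true
  | Node ts => (2 <= size ts) && all reduced ts
  end.

Fixpoint nleaves (t : tree) : nat :=
  match t with
  | Leaf => 1
  | Node ts => sumn (map nleaves ts)
  end.

Definition weight (t : tree) : nat := (nleaves t).-1.

Definition prime_tree (t : tree) : bool :=
  (2 <= nleaves t) &&
  match t with
  | Leaf => false
  | Node ts => match ts with [::] => false | c :: cs => if last c cs is Leaf then true else false end
  end.

Definition PST (n : nat) (t : tree) : bool :=
  [&& reduced t, prime_tree t & weight t == n].

Inductive lbt := LLeaf of nat | LNode of lbt & lbt.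

Fixpoint lbt_eqb (a b : lbt) : bool :=
  match a, b with
  | LLeaf x, LLeaf y => x == y
  | LNode a1 a2, LNode b1 b2 => lbt_eqb a1 b1 && lbt_eqb a2 b2
  | _, _ => false
  end.

Lemma lbt_eqbP : Equality.axiom lbt_eqb.
Proof.
elim=> [x|a1 IH1 a2 IH2] [y|b1 b2] /=; try by constructor.
- by apply: (iffP eqP) => [->|[]].
- case: (IH1 b1) => [->|h] /=; last by constructor; case.
  by case: (IH2 b2) => [->|h]; constructor; [|case].
Qed.

HB.instance Definition _ := hasDecEq.Build lbt lbt_eqbP.

Fixpoint lleaves (b : lbt) : seq nat :=
  match b with
  | LLeaf k => [:: k]
  | LNode l r => lleaves l ++ lleaves r
  end.

Definition noncrossing (bs : seq (seq nat)) : Prop :=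
  forall B1 B2, B1 \in bs -> B2 \in bs -> B1 != B2 ->
  forall a b c d, a < b -> b < c -> c < d ->
  a \in B1 -> c \in B1 -> b \in B2 -> d \in B2 -> False.

(* A_n : noncrossing arrangements of binary trees on [n].  An arrangement
   (a set of trees) is represented by a list of trees, considered up to
   permutation (perm_eq). *)
Definition inA (n : nat) (a : seq lbt) : Prop :=
  [/\ all (fun b => sorted ltn (lleaves b)) a,
      perm_eq (flatten (map lleaves a)) (iota 1 n)
    & noncrossing (map lleaves a)].

Inductive ltree := LL of nat | LN of seq ltree.

Fixpoint lab (t : tree) (k : nat) : ltree * nat :=
  match t with
  | Leaf => (LL k, k.+1)
  | Node ts =>
    let fix labs (ts : seq tree) (k : nat) : seq ltree * nat :=
      match ts with
      | [::] => ([::], k)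
      | u :: us => let: (u', k1) := lab u k in
                   let: (us', k2) := labs us k1 in (u' :: us', k2)
      end in
    let: (ts', k') := labs ts k in (LN ts', k')
  end.

(* the component hanging from a vertex once all middle edges are deleted:
   only the edges to the leftmost and rightmost children survive *)
Fixpoint comp (t : ltree) : lbt :=
  match t with
  | LL k => LLeaf k
  | LN ts =>
    match ts with
    | [::] => LLeaf 0 (* does not occur for reduced trees *)
    | c :: cs =>
      let fix lastc (cs : seq ltree) : option lbt :=
        match cs with
        | [::] => None
        | c' :: cs' => if lastc cs' is Some b then Some b else Some (comp c')
        end in
      LNode (comp c) (if lastc cs is Some b then b else comp c)
    end
  end.

Definition middle (T : Type) (ts : seq T) : seq T :=
  drop 1 (take (size ts).-1 ts).

(* all components rooted strictly inside t at middle children (after deleting middle edges) *)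
Fixpoint cuts (t : ltree) : seq lbt :=
  match t with
  | LL _ => [::]
  | LN ts => map comp (middle ts) ++ flatten (map cuts ts)
  end.

(* the map of the theorem: label leaves 1..n+1 left to right, delete the root
   and its edges and the middle edges; discard the rightmost child of the root
   (the isolated leaf labeled n+1); collect the remaining components. *)
Definition phi (t : tree) : seq lbt :=
  match (lab t 1).1 with
  | LL _ => [::]
  | LN ts => map comp (take (size ts).-1 ts) ++ flatten (map cuts ts)
  end.

(* Label the leaves of a prime tree by 1, ..., n + 1.  Removing the root and
   the leaf n + 1 leaves a reduced forest whose trees carry consecutive
   intervals of labels, and [phi] cuts each of them at its middle edges.  In a
   reduced tree with children c, ms, d and leaves a, ..., a + k - 1, the
   component through the root is [LNode (comp c) (comp d)]: it contains a and
   a + k - 1, the other components coming from c lie below the last leaf of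
   [comp c], those from ms between [comp c] and [comp d], and those from d
   above the first leaf of [comp d].  By induction the components form a
   noncrossing arrangement of the interval.  Conversely, noncrossingness forces
   every other block of an arrangement into one of these three gaps of the
   block through a, according to where its first leaf lies; splitting along
   the gaps and recursing rebuilds the tree, and does so uniquely. *)

From mathcomp Require Import all_boot zify.
Set Implicit Arguments. Unset Strict Implicit. Unset Printing Implicit Defensive.

Lemma perm_cat_split (T : eqType) (P : pred T) (s1 s2 t1 t2 : seq T) :
  all P s1 -> all P t1 -> all (predC P) s2 -> all (predC P) t2 ->
  perm_eq (s1 ++ s2) (t1 ++ t2) -> perm_eq s1 t1 /\ perm_eq s2 t2.
Proof.
move=> Ps1 Pt1 Ps2 Pt2 eq_st.
have filterC_nil s : all (predC P) s -> filter P s = [::].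
  by move=> Ps; rewrite (eq_in_filter (a2 := pred0)) ?filter_pred0 // => x /(allP Ps)/negbTE.
have filter_nil s : all P s -> filter (predC P) s = [::].
  by move=> Ps; rewrite (eq_in_filter (a2 := pred0)) ?filter_pred0 // => x /(allP Ps) /= ->.
split.
  have := perm_filter P eq_st.
  by rewrite !filter_cat (all_filterP Ps1) (all_filterP Pt1) !filterC_nil ?cats0.
have := perm_filter (predC P) eq_st.
by rewrite !filter_cat (all_filterP Ps2) (all_filterP Pt2) !filter_nil.
Qed.

Lemma cat_eq_iota (s1 s2 : seq nat) lo n : s1 ++ s2 = iota lo n ->
  s1 = iota lo (size s1) /\ s2 = iota (lo + size s1) (size s2).
Proof.
move=> eq_s; have n_eq : n = size s1 + size s2 by rewrite -size_cat eq_s size_iota.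
move: eq_s; rewrite n_eq iotaD => /eqP; rewrite eqseq_cat ?size_iota //.
by case/andP=> /eqP -> /eqP ->; rewrite !size_iota.
Qed.

Lemma iota_sub_cat a b c : a <= b <= c -> iota a (b - a) ++ iota b (c - b) = iota a (c - a).
Proof.
move=> abc; rewrite [in iota b _](_ : b = a + (b - a)); last by lia.
by rewrite -iotaD; congr iota; lia.
Qed.

Lemma perm_iota_cat (s1 s2 : seq nat) lo n m : lo <= m <= lo + n ->
  {in s1, forall x, x < m} -> {in s2, forall x, m <= x} ->
  perm_eq (s1 ++ s2) (iota lo n) ->
  perm_eq s1 (iota lo (m - lo)) /\ perm_eq s2 (iota m (lo + n - m)).
Proof.
move=> lo_m_n lt_s1 ge_s2.
have -> : iota lo n = iota lo (m - lo) ++ iota m (lo + n - m) by rewrite iota_sub_cat // addKn.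
apply: (perm_cat_split (P := fun x => x < m)); apply/allP => x //=.
- exact: lt_s1.
- by rewrite mem_iota; lia.
- by move/ge_s2; rewrite -leqNgt.
- by rewrite mem_iota -leqNgt; lia.
Qed.

Definition nocross (A B : seq nat) : Prop :=
  forall a b c d, a < b -> b < c -> c < d ->
  a \in A -> c \in A -> b \in B -> d \in B -> False.

Definition noncrossing_pair (A B : seq nat) : Prop := nocross A B /\ nocross B A.

Lemma noncrossing_pair_sub A B A' B' : {subset A' <= A} -> {subset B' <= B} ->
  noncrossing_pair A B -> noncrossing_pair A' B'.
Proof.
move=> subA subB [AB BA]; split=> a b c d ab bc cd ha hc hb hd.
  exact: (AB a b c d) (subA _ _) (subA _ _) (subB _ _) (subB _ _).
exact: (BA a b c d) (subB _ _) (subB _ _) (subA _ _) (subA _ _).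
Qed.

Lemma noncrossing_pair_lt A B : {in A & B, forall x y, x < y} -> noncrossing_pair A B.
Proof.
move=> lt_AB; split=> a b c d _ bc cd ha hc hb hd.
  by have := lt_AB _ _ hc hb; lia.
by have := lt_AB _ _ hd hc; lia.
Qed.

Lemma noncrossing_pair_cat A1 A2 B q p :
  q \in A1 -> p \in A2 -> {in A1, forall x, x <= q} -> {in A2, forall x, p <= x} -> q < p ->
  noncrossing_pair A1 B -> noncrossing_pair A2 B ->
  [\/ {in B, forall z, z < q}, {in B, forall z, q < z < p} | {in B, forall z, p < z}] ->
  noncrossing_pair (A1 ++ A2) B.
Proof.
move=> qA1 pA2 le_q ge_p qp [A1B BA1] [A2B BA2] regB.
split=> a b c d ab bc cd; rewrite !mem_cat.
- case/orP=> [aA1|aA2] /orP [cA1|cA2] bB dB.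
  + exact: (A1B a b c d).
  + case: regB => reg; have := le_q _ aA1; have := ge_p _ cA2.
    * by have := reg _ dB; lia.
    * by have := reg _ dB; lia.
    * by move=> _ _; apply: (A2B p b c d) => //; have := reg _ bB; lia.
  + by have := le_q _ cA1; have := ge_p _ aA2; lia.
  + exact: (A2B a b c d).
- move=> aB cB /orP [bA1|bA2] /orP [dA1|dA2].
  + exact: (BA1 a b c d).
  + case: regB => reg; have := le_q _ bA1.
    * by move=> _; apply: (BA1 a b c q) => //; have := reg _ cB; lia.
    * by have := reg _ aB; lia.
    * by have := reg _ aB; lia.
  + by have := le_q _ dA1; have := ge_p _ bA2; lia.
  + exact: (BA2 a b c d).
Qed.

Lemma noncrossing_sub (S T : seq (seq nat)) : {subset S <= T} -> noncrossing T -> noncrossing S.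
Proof. by move=> subST ncT A B /subST AT /subST BT; apply: ncT. Qed.

Lemma noncrossing_cons A (S : seq (seq nat)) : noncrossing S ->
  {in S, forall B, noncrossing_pair A B} -> noncrossing (A :: S).
Proof.
move=> ncS ncA B1 B2; rewrite !inE => /predU1P [->|B1S] /predU1P [->|B2S].
- by rewrite eqxx.
- by move=> _; case: (ncA _ B2S).
- by move=> _; case: (ncA _ B1S).
- exact: ncS.
Qed.

Lemma noncrossing_cat (S1 S2 : seq (seq nat)) : noncrossing S1 -> noncrossing S2 ->
  {in S1 & S2, forall A B, noncrossing_pair A B} -> noncrossing (S1 ++ S2).
Proof.
move=> nc1 nc2 nc12 B1 B2; rewrite !mem_cat => /orP [B1S|B1S] /orP [B2S|B2S].
- exact: nc1.
- by move=> _; case: (nc12 _ _ B1S B2S).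
- by move=> _; case: (nc12 _ _ B2S B1S).
- exact: nc2.
Qed.

(** * Arrangements of an interval *)

Fixpoint first_leaf (X : lbt) : nat :=
  match X with LLeaf k => k | LNode l _ => first_leaf l end.

Fixpoint last_leaf (X : lbt) : nat :=
  match X with LLeaf k => k | LNode _ r => last_leaf r end.

Lemma first_leaf_in X : first_leaf X \in lleaves X.
Proof. by elim: X => [k|l IHl r _] /=; rewrite ?mem_seq1 ?mem_cat ?IHl. Qed.

Lemma last_leaf_in X : last_leaf X \in lleaves X.
Proof. by elim: X => [k|l _ r IHr] /=; rewrite ?mem_seq1 ?mem_cat ?IHr ?orbT. Qed.

Lemma sorted_leaves_bounds X : sorted ltn (lleaves X) ->
  {in lleaves X, forall x, first_leaf X <= x <= last_leaf X}.
Proof.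
elim: X => [k|l IHl r IHr] /=; first by move=> _ x; rewrite mem_seq1 => /eqP ->; lia.
rewrite (sorted_pairwise ltn_trans) pairwise_cat -!(sorted_pairwise ltn_trans).
case/and3P=> /allrelP lt_lr /IHl bl /IHr br x; rewrite mem_cat => /orP [xl|xr].
  by have := lt_lr _ _ (last_leaf_in l) (last_leaf_in r); have := bl _ xl; lia.
by have := lt_lr _ _ (first_leaf_in l) xr; have := br _ xr; lia.
Qed.

Lemma sorted_lnode L R : sorted ltn (lleaves (LNode L R)) =
  [&& sorted ltn (lleaves L), sorted ltn (lleaves R) & last_leaf L < first_leaf R].
Proof.
rewrite /= (sorted_pairwise ltn_trans) pairwise_cat -!(sorted_pairwise ltn_trans).
apply/and3P/and3P=> [[/allrelP lt_LR sL sR]|[sL sR lt_LR]]; split=> //.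
  exact: lt_LR (last_leaf_in L) (first_leaf_in R).
apply/allrelP=> x y /(sorted_leaves_bounds sL) bx /(sorted_leaves_bounds sR) by_; lia.
Qed.

Definition leaves_of (s : seq lbt) : seq nat := flatten (map lleaves s).

Lemma leaves_of_cat s1 s2 : leaves_of (s1 ++ s2) = leaves_of s1 ++ leaves_of s2.
Proof. by rewrite /leaves_of map_cat flatten_cat. Qed.

(* [inA n] unfolds to [arrangement 1 n]. *)
Definition arrangement (lo n : nat) (s : seq lbt) : Prop :=
  [/\ all (fun X => sorted ltn (lleaves X)) s, perm_eq (leaves_of s) (iota lo n)
    & noncrossing (map lleaves s)].

Lemma arrangement_perm lo n s t : perm_eq s t -> arrangement lo n s -> arrangement lo n t.
Proof.
move=> st [srt pe nc]; split.
- by rewrite -(perm_all _ st).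
- by apply: perm_trans pe; rewrite perm_sym; apply/perm_flatten/perm_map.
- by apply: noncrossing_sub nc => B; rewrite (perm_mem (perm_map _ st)).
Qed.

Lemma arrangement_sorted lo n s X : arrangement lo n s -> X \in s -> sorted ltn (lleaves X).
Proof. by case=> srt _ _ /(allP srt). Qed.

Lemma arrangement_range lo n s X x : arrangement lo n s -> X \in s -> x \in lleaves X ->
  lo <= x < lo + n.
Proof.
by case=> _ pe _ Xs xX; rewrite -mem_iota -(perm_mem pe); apply/flatten_mapP; exists X.
Qed.

Lemma arrangement_first_leaf lo n s X : arrangement lo n s -> X \in s ->
  lo <= first_leaf X < lo + n.
Proof. by move=> A Xs; apply: arrangement_range A Xs (first_leaf_in X). Qed.

Lemma arrangement0 lo s : arrangement lo 0 s -> s = [::].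
Proof. by case: s => // X s /arrangement_first_leaf /(_ (mem_head X s)); lia. Qed.

Lemma arrangement_apart lo n X s Y : arrangement lo n (X :: s) -> Y \in s ->
  {in lleaves X, forall x, x \notin lleaves Y} /\ noncrossing_pair (lleaves X) (lleaves Y).
Proof.
move=> [_ pe nc] Ys.
have apart : {in lleaves X, forall x, x \notin lleaves Y}.
  move=> x xX; apply/negP=> xY.
  have := perm_uniq pe; rewrite iota_uniq /leaves_of /= cat_uniq => /and3P [_ /hasPn dis _].
  have xs : x \in leaves_of s by apply/flatten_mapP; exists Y.
  by have := dis x xs; rewrite /= xX.
split=> //.
have XY : lleaves X != lleaves Y.
  apply/eqP=> eqXY; have := first_leaf_in Y.
  by rewrite -{1}eqXY => /apart; rewrite first_leaf_in.
have Ym : lleaves Y \in map lleaves (X :: s) by rewrite map_f // inE Ys orbT.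
by split; apply: nc; rewrite ?mem_head // eq_sym.
Qed.

Lemma arrangement_leaves_neq lo n X s Z x z : arrangement lo n (X :: s) -> Z \in s ->
  x \in lleaves X -> z \in lleaves Z -> z != x.
Proof.
move=> A Zs xX zZ; apply/eqP=> eq_z; have [/(_ x xX)] := arrangement_apart A Zs.
by rewrite -eq_z zZ.
Qed.

Lemma arrangement_cat lo n1 n2 s1 s2 :
  arrangement lo n1 s1 -> arrangement (lo + n1) n2 s2 -> arrangement lo (n1 + n2) (s1 ++ s2).
Proof.
move=> A1 A2; have [srt1 pe1 nc1] := A1; have [srt2 pe2 nc2] := A2; split.
- by rewrite all_cat srt1.
- by rewrite leaves_of_cat iotaD perm_cat.
- rewrite map_cat; apply: noncrossing_cat => // _ _ /mapP [X Xs ->] /mapP [Y Ys ->].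
  apply: noncrossing_pair_lt => x y.
  by move=> /(arrangement_range A1 Xs) + /(arrangement_range A2 Ys); lia.
Qed.

Lemma arrangement_cat_inv lo n m s1 s2 : lo <= m <= lo + n ->
  {in s1, forall X, {in lleaves X, forall x, x < m}} ->
  {in s2, forall X, {in lleaves X, forall x, m <= x}} ->
  arrangement lo n (s1 ++ s2) -> arrangement lo (m - lo) s1 /\ arrangement m (lo + n - m) s2.
Proof.
move=> lo_m_n lt_s1 ge_s2 [srt pe nc].
have [pe1 pe2] : perm_eq (leaves_of s1) (iota lo (m - lo)) /\
                 perm_eq (leaves_of s2) (iota m (lo + n - m)).
  apply: perm_iota_cat lo_m_n _ _ _; last by rewrite -leaves_of_cat.
    by move=> x /flatten_mapP [X /lt_s1]; apply.
  by move=> x /flatten_mapP [X /ge_s2]; apply.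
move: srt; rewrite all_cat => /andP [srt1 srt2].
by split; split=> //; apply: noncrossing_sub nc => B; rewrite map_cat mem_cat => ->; rewrite ?orbT.
Qed.

Lemma arrangement_merge_node lo n L R s : arrangement lo n (L :: R :: s) ->
  last_leaf L < first_leaf R ->
  {in s, forall Z, [\/ {in lleaves Z, forall z, z < last_leaf L},
                       {in lleaves Z, forall z, last_leaf L < z < first_leaf R}
                     | {in lleaves Z, forall z, first_leaf R < z}]} ->
  arrangement lo n (LNode L R :: s).
Proof.
move=> A lt_LR reg; have [srt pe nc] := A; move: srt => /= /and3P [sL sR srt].
have A' : arrangement lo n (R :: L :: s).
  by apply: arrangement_perm A; rewrite (perm_catCA [:: L] [:: R]).
split.
- by rewrite /= sorted_lnode sL sR lt_LR.
- by rewrite /leaves_of /= -catA.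
apply: noncrossing_cons.
  by apply: noncrossing_sub nc => B Bs; rewrite !inE Bs !orbT.
move=> _ /mapP [Z Zs ->].
have Zs' x : Z \in x :: s by rewrite inE Zs orbT.
have [_ ncL] := arrangement_apart A (Zs' R).
have [_ ncR] := arrangement_apart A' (Zs' L).
apply: noncrossing_pair_cat (last_leaf_in L) (first_leaf_in R) _ _ lt_LR ncL ncR (reg _ Zs).
  by move=> x /(sorted_leaves_bounds sL) /andP [].
by move=> x /(sorted_leaves_bounds sR) /andP [].
Qed.

Lemma arrangement_split_node lo n L R s :
  arrangement lo n (LNode L R :: s) -> arrangement lo n (L :: R :: s).
Proof.
move=> A; have [srt pe nc] := A; move: srt => /= /andP [].
rewrite sorted_lnode => /and3P [sL sR lt_LR] srt.
have ncZ Z : Z \in s -> noncrossing_pair (lleaves L ++ lleaves R) (lleaves Z).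
  by case/(arrangement_apart A).
split.
- by rewrite /= sL sR.
- by rewrite /leaves_of /= catA.
apply: noncrossing_cons; first apply: noncrossing_cons.
- by apply: noncrossing_sub nc => B Bs; rewrite inE Bs orbT.
- move=> _ /mapP [Z Zs ->]; apply: noncrossing_pair_sub (ncZ Z Zs) => // x xR.
  by rewrite mem_cat xR orbT.
move=> B; rewrite inE => /predU1P [->|/mapP [Z Zs ->]].
  apply: noncrossing_pair_lt => x y /(sorted_leaves_bounds sL) + /(sorted_leaves_bounds sR).
  by lia.
by apply: noncrossing_pair_sub (ncZ Z Zs) => // x xL; rewrite mem_cat xL.
Qed.

Lemma perm_arrangement_head lo n n' X X' s s' :
  arrangement lo n (X :: s) -> arrangement lo n' (X' :: s') ->
  lo \in lleaves X -> lo \in lleaves X' -> perm_eq (X :: s) (X' :: s') ->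
  X = X' /\ perm_eq s s'.
Proof.
move=> A A' loX loX' eq_s.
have rest_avoids Y t m : arrangement lo m (Y :: t) -> lo \in lleaves Y ->
    all (predC (fun Z => lo \in lleaves Z)) t.
  by move=> AY loY; apply/allP=> Z Zt /=; have [/(_ lo loY)] := arrangement_apart AY Zt.
have [eqX ->] : perm_eq [:: X] [:: X'] /\ perm_eq s s'.
  apply: (@perm_cat_split _ (fun Z => lo \in lleaves Z) [:: X] s [:: X'] s') eq_s;
    rewrite /= ?loX ?loX' //.
    exact: rest_avoids A loX.
  exact: rest_avoids A' loX'.
by split=> //; have := perm_mem eqX X; rewrite !inE eqxx => /esym/eqP.
Qed.

Section NestedBlocks.

Variables (lo n : nat) (B : lbt) (s : seq lbt).
Hypothesis A : arrangement lo n (B :: s).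

Lemma leaves_above Z p : Z \in s -> p \in lleaves B -> p <= first_leaf Z ->
  {in lleaves Z, forall z, p < z}.
Proof.
move=> Zs pB pZ z zZ; have := arrangement_leaves_neq A Zs pB (first_leaf_in Z).
have sZ := arrangement_sorted A (predU1r _ _ Zs).
by have /andP [fz _] := sorted_leaves_bounds sZ zZ; lia.
Qed.

(* Reaching beyond [q] would make [Z] cross [B] at [p < first_leaf Z < q < z]. *)
Lemma leaves_below Z p q : Z \in s -> p \in lleaves B -> q \in lleaves B ->
  p <= first_leaf Z < q -> {in lleaves Z, forall z, z < q}.
Proof.
move=> Zs pB qB /andP [pZ Zq] z zZ; have [_ [ncBZ _]] := arrangement_apart A Zs.
have pZ' := leaves_above Zs pB pZ (first_leaf_in Z).
rewrite ltn_neqAle (arrangement_leaves_neq A Zs qB zZ) leqNgt; apply/negP=> qz.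
exact: (ncBZ p (first_leaf Z) q z) (first_leaf_in Z) _.
Qed.

End NestedBlocks.

Lemma arrangement_split_first lo n s : arrangement lo n s -> 0 < n ->
  exists B s1 s2, [/\ perm_eq s (B :: s1 ++ s2), first_leaf B = lo,
    lo <= last_leaf B < lo + n, arrangement lo ((last_leaf B).+1 - lo) (B :: s1)
    & arrangement (last_leaf B).+1 (lo + n - (last_leaf B).+1) s2].
Proof.
move=> A n_gt0; have [_ pe _] := A.
have /flatten_mapP [B Bs loB] : lo \in leaves_of s by rewrite (perm_mem pe) mem_iota; lia.
have eq_s := perm_to_rem Bs; set s' := rem B s in eq_s.
have A' : arrangement lo n (B :: s') by apply: arrangement_perm A.
set m := last_leaf B; have sB := arrangement_sorted A' (mem_head B s').
have [fB mB] : first_leaf B = lo /\ lo <= m < lo + n.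
  have := sorted_leaves_bounds sB loB; have := arrangement_first_leaf A' (mem_head B s').
  by have := arrangement_range A' (mem_head B s') (last_leaf_in B); lia.
pose p Z := first_leaf Z < m.
have eq_s' : perm_eq (filter p s' ++ filter (predC p) s') s' by rewrite perm_filterC.
have [A1 A2] : arrangement lo (m.+1 - lo) (B :: filter p s') /\
               arrangement m.+1 (lo + n - m.+1) (filter (predC p) s').
  apply: arrangement_cat_inv; first by lia.
  - move=> X; rewrite inE => /predU1P [->|]; first by move=> z /(sorted_leaves_bounds sB); lia.
    rewrite mem_filter => /andP [pX Xs] z /(leaves_below A' Xs loB (last_leaf_in B)).
    by have := arrangement_first_leaf A' (predU1r _ _ Xs); rewrite /p in pX; lia.
  - move=> X; rewrite mem_filter => /andP [pX Xs].
    by apply: (leaves_above A' Xs (last_leaf_in B)); rewrite /p /= in pX; lia.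
  - by apply: arrangement_perm A'; rewrite perm_cons perm_sym.
exists B, (filter p s'), (filter (predC p) s'); split=> //.
by apply: perm_trans eq_s _; rewrite perm_cons perm_sym.
Qed.

Lemma arrangement_lnode_blocks lo n L R s Z :
  arrangement lo n (LNode L R :: s) -> first_leaf L = lo -> Z \in s ->
  [/\ first_leaf Z < last_leaf L -> {in lleaves Z, forall z, z < last_leaf L},
      last_leaf L <= first_leaf Z -> {in lleaves Z, forall z, last_leaf L < z},
      last_leaf L <= first_leaf Z < first_leaf R -> {in lleaves Z, forall z, z < first_leaf R}
    & first_leaf R <= first_leaf Z -> {in lleaves Z, forall z, first_leaf R < z}].
Proof.
move=> A fL Zs.
have loB : lo \in lleaves (LNode L R) by rewrite mem_cat -fL first_leaf_in.
have xB : last_leaf L \in lleaves (LNode L R) by rewrite mem_cat last_leaf_in.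
have yB : first_leaf R \in lleaves (LNode L R) by rewrite mem_cat first_leaf_in orbT.
split=> [fx|xf|xfy|yf] z zZ.
- apply: (leaves_below A Zs loB xB) zZ.
  by have /andP [-> _] := arrangement_first_leaf A (predU1r _ _ Zs).
- exact (leaves_above A Zs xB xf zZ).
- exact (leaves_below A Zs xB yB xfy zZ).
- exact (leaves_above A Zs yB yf zZ).
Qed.

Lemma arrangement_split_lnode lo n L R s :
  arrangement lo n (LNode L R :: s) -> first_leaf L = lo ->
  exists sL sM sR, [/\ perm_eq s (sL ++ sM ++ sR),
    arrangement lo ((last_leaf L).+1 - lo) (L :: sL),
    arrangement (last_leaf L).+1 (first_leaf R - (last_leaf L).+1) sM
    & arrangement (first_leaf R) (lo + n - first_leaf R) (R :: sR)].
Proof.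
move=> A fL; have blocks := arrangement_lnode_blocks A fL.
set x := last_leaf L; set y := first_leaf R in blocks *.
have := arrangement_sorted A (mem_head _ s); rewrite sorted_lnode => /and3P [sL sR lt_xy].
have lo_x : lo <= x by have := sorted_leaves_bounds sL (last_leaf_in L); lia.
have y_n : y < lo + n.
  have yB : y \in lleaves (LNode L R) by rewrite mem_cat first_leaf_in orbT.
  by have /andP [] := arrangement_range A (mem_head _ s) yB.
pose pL Z := first_leaf Z < x; pose pM Z := first_leaf Z < y; set t := filter (predC pL) s.
have eq_s : perm_eq s (filter pL s ++ filter pM t ++ filter (predC pM) t).
  have eq_t : perm_eq (filter pM t ++ filter (predC pM) t) t by rewrite perm_filterC.
  by rewrite -(perm_filterC pL) perm_cat2l perm_sym.
have above_x X : X \in t -> {in lleaves X, forall z, x < z}.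
  by rewrite mem_filter /= -leqNgt => /andP [xX /blocks [_ /(_ xX)]].
have [A1 A23] : arrangement lo (x.+1 - lo) (L :: filter pL s) /\
    arrangement x.+1 (lo + n - x.+1) (filter pM t ++ R :: filter (predC pM) t).
  apply: arrangement_cat_inv; first by lia.
  - move=> X; rewrite inE => /predU1P [->|]; first by move=> z /(sorted_leaves_bounds sL); lia.
    by rewrite mem_filter => /andP [Xx /blocks [/(_ Xx) below _ _ _]] z /below; lia.
  - move=> X; rewrite mem_cat inE => /or3P [|/eqP->|]; rewrite 1?mem_filter.
    + by case/andP=> _; apply: above_x.
    + by move=> z /(sorted_leaves_bounds sR); lia.
    + by case/andP=> _; apply: above_x.
  - apply: arrangement_perm (arrangement_split_node A).
    by apply/permP=> P; move/permP/(_ P): eq_s; rewrite /= !count_cat /=; lia.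
have [A2 A3] : arrangement x.+1 (y - x.+1) (filter pM t) /\
    arrangement y (x.+1 + (lo + n - x.+1) - y) (R :: filter (predC pM) t).
  apply: arrangement_cat_inv A23; first by lia.
  - rewrite /t => X; rewrite !mem_filter /= -leqNgt => /and3P [Xy xX /blocks [_ _ below _]].
    by apply: below; rewrite xX.
  - move=> X; rewrite inE => /predU1P [->|]; first by move=> z /(sorted_leaves_bounds sR); lia.
    rewrite !mem_filter /= -leqNgt => /and3P [yX _ /blocks [_ _ _ /(_ yX) above]] z /above.
    by lia.
rewrite (_ : x.+1 + _ - y = lo + n - y) in A3; last by lia.
by exists (filter pL s), (filter pM t), (filter (predC pM) t).
Qed.

(** * Labelled reduced trees *)

Definition tree_nested_ind (P : tree -> Prop) (HL : P Leaf)
    (HN : forall ts, List.Forall P ts -> P (Node ts)) : forall t, P t :=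
  fix ind t := match t with
  | Leaf => HL
  | Node ts => HN ts ((fix ind_seq ts := match ts return List.Forall P ts with
      | [::] => List.Forall_nil _
      | t :: ts => List.Forall_cons _ (ind t) (ind_seq ts) end) ts)
  end.

Definition ltree_nested_ind (P : ltree -> Prop) (HL : forall k, P (LL k))
    (HN : forall ts, List.Forall P ts -> P (LN ts)) : forall u, P u :=
  fix ind u := match u with
  | LL k => HL k
  | LN ts => HN ts ((fix ind_seq ts := match ts return List.Forall P ts with
      | [::] => List.Forall_nil _
      | u :: us => List.Forall_cons _ (ind u) (ind_seq us) end) ts)
  end.

Fixpoint shape (u : ltree) : tree :=
  match u with LL _ => Leaf | LN us => Node (map shape us) end.

Fixpoint labels (u : ltree) : seq nat :=
  match u with LL k => [:: k] | LN us => flatten (map labels us) end.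

Fixpoint lreduced (u : ltree) : bool :=
  match u with LL _ => true | LN us => (2 <= size us) && all lreduced us end.

Lemma reduced_shape u : reduced (shape u) = lreduced u.
Proof.
elim/ltree_nested_ind: u => // us IH /=; rewrite size_map; congr (_ && _).
by elim: IH => //= u us' -> _ ->.
Qed.

(* An internal node is [LN (c :: rcons ms d)]: the children [ms] are the ones
   reached through middle edges. *)
Lemma labels_node c ms d :
  labels (LN (c :: rcons ms d)) = labels c ++ flatten (map labels ms) ++ labels d.
Proof. by rewrite /= map_rcons -cats1 flatten_cat /= cats0. Qed.

Lemma lreduced_node c ms d :
  lreduced (LN (c :: rcons ms d)) = [&& lreduced c, all lreduced ms & lreduced d].
Proof. by rewrite /= size_rcons all_rcons [lreduced d && _]andbC. Qed.

Lemma lreduced_cases u : lreduced u ->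
  (exists k, u = LL k) \/ exists c ms d, u = LN (c :: rcons ms d) /\ lreduced u.
Proof.
case: u => [k|[|c us]] //=; first by left; exists k.
by case/lastP: us => [|ms d] // red_u; right; exists c, ms, d.
Qed.

Lemma lreduced_mutual_ind (P : ltree -> Prop) (Q : seq ltree -> Prop) :
  (forall k, P (LL k)) ->
  (forall c ms d, lreduced c -> all lreduced ms -> lreduced d ->
     P c -> Q ms -> P d -> P (LN (c :: rcons ms d))) ->
  Q [::] ->
  (forall c cs, lreduced c -> all lreduced cs -> P c -> Q cs -> Q (c :: cs)) ->
  (forall u, lreduced u -> P u) /\ (forall cs, all lreduced cs -> Q cs).
Proof.
move=> HL HN Qnil Qcons.
have Qall cs : List.Forall (fun u => lreduced u -> P u) cs -> all lreduced cs -> Q cs.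
  by elim=> //= c cs' Pc _ IH /andP [rc rcs]; apply: Qcons (Pc rc) (IH rcs).
have Forall_rcons (R : ltree -> Prop) ms d : List.Forall R (rcons ms d) -> List.Forall R ms /\ R d.
  elim: ms => [|m ms IH] /= Rs; first by split; [constructor|exact: List.Forall_inv Rs].
  have [Rms Rd] := IH (List.Forall_inv_tail Rs).
  by split=> //; constructor=> //; exact: List.Forall_inv Rs.
have Pall u : lreduced u -> P u.
  elim/ltree_nested_ind: u => // us IH /= /andP [].
  case: us IH => [|c us] //; case/lastP: us => [|ms d] // IH _ /=.
  rewrite all_rcons => /and3P [rc rd rms].
  have /Forall_rcons [IHms IHd] := List.Forall_inv_tail IH.
  exact: HN (List.Forall_inv IH rc) (Qall _ IHms rms) (IHd rd).
split=> // cs; apply: Qall; elim: cs => //= c cs IH; constructor=> //; exact: Pall.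
Qed.

(* The fixpoint local to [lab]. *)
Fixpoint labs (ts : seq tree) (k : nat) : seq ltree * nat :=
  match ts with
  | [::] => ([::], k)
  | u :: us => let: (u', k1) := lab u k in
               let: (us', k2) := labs us k1 in (u' :: us', k2)
  end.

Lemma lab_node ts k : lab (Node ts) k = let: (ts', k') := labs ts k in (LN ts', k').
Proof. by []. Qed.

Lemma lab_spec t a :
  [/\ shape (lab t a).1 = t, labels (lab t a).1 = iota a (nleaves t) & (lab t a).2 = a + nleaves t].
Proof.
elim/tree_nested_ind: t a => [|ts IH] a; first by rewrite /= addn1.
rewrite lab_node.
suff: [/\ map shape (labs ts a).1 = ts,
           flatten (map labels (labs ts a).1) = iota a (sumn (map nleaves ts))
         & (labs ts a).2 = a + sumn (map nleaves ts)].
  by case: (labs ts a) => ts' k' /= [-> -> ->].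
elim: IH a => [|u us IHu _ IHus] a /=; first by rewrite addn0.
case E1: (lab u a) => [u' k1]; case E2: (labs us k1) => [us' k2] /=.
have [] := IHu a; rewrite E1 /= => -> -> ku.
have [] := IHus k1; rewrite E2 /= => -> -> ->.
by rewrite ku -iotaD addnA.
Qed.

Lemma lab_shape u a : labels u = iota a (size (labels u)) ->
  lab (shape u) a = (u, a + size (labels u)).
Proof.
elim/ltree_nested_ind: u a => [k|us IH] a; first by case=> ->; rewrite /= addn1.
move=> eq_u; rewrite [shape _]/= lab_node.
suff -> : labs (map shape us) a = (us, a + size (flatten (map labels us))) by [].
elim: IH a eq_u => [|u us' IHu _ IHus] a /=; first by rewrite addn0.
move=> /cat_eq_iota [/IHu -> /IHus ->]; by rewrite size_cat addnA.
Qed.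

(* The fixpoint local to [comp]. *)
Fixpoint last_comp (cs : seq ltree) : option lbt :=
  match cs with
  | [::] => None
  | c :: cs' => if last_comp cs' is Some b then Some b else Some (comp c)
  end.

Lemma comp_node c ms d : comp (LN (c :: rcons ms d)) = LNode (comp c) (comp d).
Proof.
have -> : comp (LN (c :: rcons ms d)) =
  LNode (comp c) (if last_comp (rcons ms d) is Some b then b else comp c) by [].
suff -> : last_comp (rcons ms d) = Some (comp d) by [].
by elim: ms => //= m ms ->.
Qed.

Definition components (u : ltree) : seq lbt := comp u :: cuts u.

Definition forest_components (cs : seq ltree) : seq lbt := flatten (map components cs).

Lemma perm_forest_components cs :
  perm_eq (map comp cs ++ flatten (map cuts cs)) (forest_components cs).
Proof.
by elim: cs => //= c cs IH; rewrite perm_cons perm_catCA perm_cat2l.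
Qed.

Lemma middle_node (T : Type) (c : T) ms d : middle (c :: rcons ms d) = ms.
Proof. by rewrite /middle /= size_rcons /= -cats1 take_size_cat ?drop0. Qed.

Lemma cuts_node c ms d :
  perm_eq (cuts (LN (c :: rcons ms d))) (cuts c ++ forest_components ms ++ cuts d).
Proof.
rewrite /= middle_node map_rcons -cats1 flatten_cat /= cats0.
by rewrite perm_catCA perm_cat2l catA perm_cat2r perm_forest_components.
Qed.

Lemma components_node c ms d : perm_eq (components (LN (c :: rcons ms d)))
  (LNode (comp c) (comp d) :: cuts c ++ forest_components ms ++ cuts d).
Proof. by rewrite /components comp_node perm_cons cuts_node. Qed.

Lemma arrangement_components_node a p q r c ms d :
  arrangement a p (components c) -> (last_leaf (comp c)).+1 = a + p ->
  arrangement (a + p) q (forest_components ms) ->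
  arrangement (a + p + q) r (components d) -> first_leaf (comp d) = a + p + q ->
  arrangement a (p + q + r) (components (LN (c :: rcons ms d))).
Proof.
move=> Ac lc Ams Ad fd; rewrite -addnA in Ad.
have A := arrangement_cat (arrangement_cat Ac Ams) Ad.
have := components_node c ms d; rewrite perm_sym => /arrangement_perm; apply.
apply: arrangement_merge_node.
- apply: arrangement_perm A; apply/permP=> P; rewrite /= !count_cat /=; lia.
- by lia.
move=> Z; rewrite !mem_cat => /or3P [Zc|Zms|Zd]; [apply: Or31|apply: Or32|apply: Or33];
  move=> z zZ.
- have := arrangement_range Ac (predU1r _ _ Zc) zZ.
  by have := arrangement_leaves_neq Ac Zc (last_leaf_in _) zZ; lia.
- by have := arrangement_range Ams Zms zZ; lia.
- have := arrangement_range Ad (predU1r _ _ Zd) zZ.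
  by have := arrangement_leaves_neq Ad Zd (first_leaf_in _) zZ; lia.
Qed.

Lemma components_arrangement :
  (forall u, lreduced u -> forall a k, labels u = iota a k ->
     [/\ arrangement a k (components u), first_leaf (comp u) = a
       & (last_leaf (comp u)).+1 = a + k]) /\
  (forall cs, all lreduced cs -> forall a k, flatten (map labels cs) = iota a k ->
     arrangement a k (forest_components cs)).
Proof.
apply: lreduced_mutual_ind.
- move=> j a k eq_j; have k1 : k = 1 by have := congr1 size eq_j; rewrite size_iota.
  move: eq_j; rewrite k1 => -[->]; split; rewrite ?addn1 //.
  by split=> // B1 B2; rewrite !inE => /eqP -> /eqP ->; rewrite eqxx.
- move=> c ms d _ _ _ IHc IHms IHd a k eq_u.
  have := congr1 size eq_u; rewrite size_iota labels_node !size_cat addnA => <-.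
  move: eq_u; rewrite labels_node => /cat_eq_iota [/IHc [Ac fc lc]].
  move=> /cat_eq_iota [/IHms Ams /IHd [Ad fd ld]].
  rewrite comp_node /= fc; split=> //; last by rewrite ld; lia.
  exact: arrangement_components_node.
- move=> a k /(congr1 size); rewrite size_iota /= => <-.
  by split=> // B; rewrite in_nil.
- move=> c cs _ _ IHc IHcs a k eq_cs.
  have := congr1 size eq_cs; rewrite size_iota /= size_cat => <-.
  move: eq_cs => /cat_eq_iota [/IHc [Ac _ _] /IHcs Acs]; exact: arrangement_cat.
Qed.

(** * Injectivity *)

Lemma perm_split_first_leaf m (s1 s2 t1 t2 : seq lbt) : perm_eq (s1 ++ s2) (t1 ++ t2) ->
  {in s1 ++ t1, forall Z, first_leaf Z < m} -> {in s2 ++ t2, forall Z, m <= first_leaf Z} ->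
  perm_eq s1 t1 /\ perm_eq s2 t2.
Proof.
move=> eq_s lt_m ge_m.
apply: (perm_cat_split (P := fun Z => first_leaf Z < m)) eq_s; apply/allP.
- by move=> Z Zs; apply: lt_m; rewrite mem_cat Zs.
- by move=> Z Zt; apply: lt_m; rewrite mem_cat Zt orbT.
- by move=> Z Zs; rewrite /= -leqNgt; apply: ge_m; rewrite mem_cat Zs.
- by move=> Z Zt; rewrite /= -leqNgt; apply: ge_m; rewrite mem_cat Zt orbT.
Qed.

Lemma cuts_first_leaf lo n u Z : arrangement lo n (components u) -> Z \in cuts u ->
  lo <= first_leaf Z < lo + n.
Proof. by move=> Au Zu; apply: arrangement_first_leaf Au (predU1r _ _ Zu). Qed.

Lemma perm_components u u' a k k' : lreduced u -> lreduced u' ->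
  labels u = iota a k -> labels u' = iota a k' -> perm_eq (components u) (components u') ->
  comp u = comp u' /\ perm_eq (cuts u) (cuts u').
Proof.
move=> ru ru' /(components_arrangement.1 u ru) [Au fu _].
move=> /(components_arrangement.1 u' ru') [Au' fu' _].
apply: perm_arrangement_head Au Au' _ _; first by rewrite -{1}fu first_leaf_in.
by rewrite -{1}fu' first_leaf_in.
Qed.

Lemma perm_components_node a k k' c ms d c' ms' d' :
  lreduced (LN (c :: rcons ms d)) -> lreduced (LN (c' :: rcons ms' d')) ->
  labels (LN (c :: rcons ms d)) = iota a k -> labels (LN (c' :: rcons ms' d')) = iota a k' ->
  perm_eq (components (LN (c :: rcons ms d))) (components (LN (c' :: rcons ms' d'))) ->
  [/\ size (labels c') = size (labels c),
      size (flatten (map labels ms')) = size (flatten (map labels ms)),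
      perm_eq (components c) (components c'),
      perm_eq (forest_components ms) (forest_components ms')
    & perm_eq (components d) (components d')].
Proof.
have [arranged_tree arranged_forest] := components_arrangement.
move=> ru ru' lu lu' eq_u; have [] := perm_components ru ru' lu lu' eq_u.
rewrite !comp_node => -[ecc ecd] _; move: eq_u ru ru' lu lu'.
rewrite (elimT permPl (components_node c ms d)) (elimT permPr (components_node c' ms' d')).
rewrite ecc ecd perm_cons !lreduced_node !labels_node.
move=> eq_cuts /and3P [rc rms rd] /and3P [rc' rms' rd'].
move=> /cat_eq_iota [lc /cat_eq_iota [lms ld]] /cat_eq_iota [lc' /cat_eq_iota [lms' ld']].
move: lc lms ld lc' lms' ld'; set p := size (labels c); set q := size (flatten _).
set p' := size (labels c'); set q' := size (flatten (map labels ms')).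
move=> lc lms ld lc' lms' ld'.
have [Ac _ endc] := arranged_tree c rc _ _ lc; have [Ac' _ endc'] := arranged_tree c' rc' _ _ lc'.
have [Ad fd _] := arranged_tree d rd _ _ ld; have [Ad' fd' _] := arranged_tree d' rd' _ _ ld'.
have Ams := arranged_forest ms rms _ _ lms; have Ams' := arranged_forest ms' rms' _ _ lms'.
have eq_p : p' = p by move: endc endc'; rewrite ecc; lia.
have eq_q : q' = q by move: fd fd'; rewrite ecd eq_p; lia.
rewrite eq_p eq_q in Ac' Ams' Ad'.
case/(perm_split_first_leaf (m := a + p)): eq_cuts => [Z|Z|eq_cuts_c].
- by rewrite mem_cat => /orP [/(cuts_first_leaf Ac)|/(cuts_first_leaf Ac')]; lia.
- by rewrite !mem_cat -!orbA => /or4P [/(arrangement_first_leaf Ams)|/(cuts_first_leaf Ad)|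
    /(arrangement_first_leaf Ams')|/(cuts_first_leaf Ad')]; lia.
case/(perm_split_first_leaf (m := a + p + q)) => [Z|Z|eq_ms eq_cuts_d].
- by rewrite mem_cat => /orP [/(arrangement_first_leaf Ams)|/(arrangement_first_leaf Ams')]; lia.
- by rewrite mem_cat => /orP [/(cuts_first_leaf Ad)|/(cuts_first_leaf Ad')]; lia.
by split; rewrite // /components ?ecc ?ecd perm_cons.
Qed.

Lemma perm_forest_components_cons a k k' c cs c' cs' :
  all lreduced (c :: cs) -> all lreduced (c' :: cs') ->
  flatten (map labels (c :: cs)) = iota a k -> flatten (map labels (c' :: cs')) = iota a k' ->
  perm_eq (forest_components (c :: cs)) (forest_components (c' :: cs')) ->
  [/\ size (labels c') = size (labels c), perm_eq (components c) (components c')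
    & perm_eq (forest_components cs) (forest_components cs')].
Proof.
have [arranged_tree arranged_forest] := components_arrangement.
move=> rccs rccs' lccs lccs' eq_cs.
have Accs := arranged_forest _ rccs _ _ lccs; have Accs' := arranged_forest _ rccs' _ _ lccs'.
case/andP: rccs rccs' lccs lccs' => rc rcs /andP [rc' rcs'].
move=> /cat_eq_iota [lc lcs] /cat_eq_iota [lc' lcs'].
have [Ac fc endc] := arranged_tree c rc _ _ lc.
have [Ac' fc' endc'] := arranged_tree c' rc' _ _ lc'.
have a_in X : first_leaf X = a -> a \in lleaves X by move=> <-; apply: first_leaf_in.
have [ecc] := perm_arrangement_head Accs Accs' (a_in _ fc) (a_in _ fc') eq_cs.
have eq_p : size (labels c') = size (labels c) by move: endc endc'; rewrite ecc; lia.
rewrite eq_p in lcs' => eq_rest.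
have Acs := arranged_forest cs rcs _ _ lcs; have Acs' := arranged_forest cs' rcs' _ _ lcs'.
case/(perm_split_first_leaf (m := a + size (labels c))): eq_rest => [Z|Z|eq_cuts eq_cs1].
- by rewrite mem_cat => /orP [/(cuts_first_leaf Ac)|/(cuts_first_leaf Ac')]; lia.
- by rewrite mem_cat => /orP [/(arrangement_first_leaf Acs)|/(arrangement_first_leaf Acs')]; lia.
by split; rewrite // /components ecc perm_cons.
Qed.

Lemma components_injective :
  (forall u, lreduced u -> forall a k u' k', lreduced u' ->
     labels u = iota a k -> labels u' = iota a k' ->
     perm_eq (components u) (components u') -> u = u') /\
  (forall cs, all lreduced cs -> forall a k cs' k', all lreduced cs' ->
     flatten (map labels cs) = iota a k -> flatten (map labels cs') = iota a k' ->
     perm_eq (forest_components cs) (forest_components cs') -> cs = cs').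
Proof.
apply: lreduced_mutual_ind.
- move=> j a k u' k' ru' lu lu' /(perm_components (isT : lreduced (LL j)) ru' lu lu') [+ _].
  case/lreduced_cases: ru' => [[j' ->] [->] //|[c' [ms' [d' [-> _]]]]].
  by rewrite comp_node.
- move=> c ms d rc rms rd IHc IHms IHd a k u' k' ru' lu lu' eq_u.
  have ru : lreduced (LN (c :: rcons ms d)) by rewrite lreduced_node rc rms rd.
  case/lreduced_cases: ru' lu' eq_u => [[j ->] lu'|[c' [ms' [d' [-> ru']]]] lu' eq_u].
    by case/(perm_components ru (isT : lreduced (LL j)) lu lu'); rewrite comp_node.
  have [eq_p eq_q eq_c eq_ms eq_d] := perm_components_node ru ru' lu lu' eq_u.
  move: ru' lu lu'; rewrite lreduced_node !labels_node => /and3P [rc' rms' rd'].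
  move=> /cat_eq_iota [lc /cat_eq_iota [lms ld]] /cat_eq_iota [lc' /cat_eq_iota [lms' ld']].
  rewrite eq_p eq_q in lms' ld'.
  rewrite (IHc _ _ _ _ rc' lc lc' eq_c) (IHd _ _ _ _ rd' ld ld' eq_d).
  by rewrite (IHms _ _ _ _ rms' lms lms' eq_ms).
- by move=> a k [|c' cs'] k' // _ _ _ /perm_size.
move=> c cs rc rcs IHc IHcs a k [|c' cs'] k' rccs'; first by move=> _ _ /perm_size.
move=> lccs lccs' eq_ccs; have rccs : all lreduced (c :: cs) by rewrite /= rc.
have [eq_p eq_c eq_cs] := perm_forest_components_cons rccs rccs' lccs lccs' eq_ccs.
case/andP: rccs' lccs lccs' => rc' rcs' /cat_eq_iota [lc lcs] /cat_eq_iota [lc' lcs'].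
rewrite eq_p in lcs'.
by rewrite (IHc _ _ _ _ rc' lc lc' eq_c) (IHcs _ _ _ _ rcs' lcs lcs' eq_cs).
Qed.

(** * Surjectivity *)

Definition trees_realize (N : nat) : Prop :=
  forall a k B s, k < N -> arrangement a k (B :: s) -> first_leaf B = a ->
  (last_leaf B).+1 = a + k ->
  exists u, [/\ lreduced u, labels u = iota a k, comp u = B & perm_eq (cuts u) s].

Definition forests_realize (N : nat) : Prop :=
  forall a k s, k < N -> arrangement a k s ->
  exists cs, [/\ all lreduced cs, flatten (map labels cs) = iota a k
               & perm_eq (forest_components cs) s].

Lemma trees_realize_step N : trees_realize N -> forests_realize N -> trees_realize N.+1.
Proof.
move=> treeN forestN a k [j|L R] s lt_k A /= fB lB.
  subst j; case: s A => [|Z s] A; last first.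
    have := arrangement_first_leaf A (predU1r _ _ (mem_head Z s)).
    have /= := arrangement_leaves_neq A (mem_head Z s) (first_leaf_in _) (first_leaf_in Z).
    by lia.
  by exists (LL a); rewrite (_ : k = 1) //; lia.
have [sL [sM [sR [eq_s AL AM AR]]]] := arrangement_split_lnode A fB.
have := arrangement_sorted A (mem_head _ s); rewrite sorted_lnode => /and3P [sLs sRs lt_LR].
have /andP [aL _] := sorted_leaves_bounds sLs (last_leaf_in L).
have /andP [Rb _] := sorted_leaves_bounds sRs (last_leaf_in R).
have [uL [rL lL cL eqL]] :=
  treeN a ((last_leaf L).+1 - a) L sL ltac:(lia) AL fB ltac:(lia).
have [cs [rcs lcs eqM]] :=
  forestN (last_leaf L).+1 (first_leaf R - (last_leaf L).+1) sM ltac:(lia) AM.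
have [uR [rR lR cR eqR]] :=
  treeN (first_leaf R) (a + k - first_leaf R) R sR ltac:(lia) AR erefl ltac:(lia).
exists (LN (uL :: rcons cs uR)); split.
- by rewrite lreduced_node rL rcs rR.
- by rewrite labels_node lL lcs lR !iota_sub_cat; [congr iota|..]; lia.
- by rewrite comp_node cL cR.
- apply: perm_trans (cuts_node uL cs uR) _; rewrite perm_sym.
  apply: perm_trans eq_s _; rewrite perm_sym.
  exact: perm_cat eqL (perm_cat eqM eqR).
Qed.

Lemma forests_realize_step N : trees_realize N.+1 -> forests_realize N -> forests_realize N.+1.
Proof.
move=> treeN1 forestN a [|k] s lt_k A; first by exists [::]; rewrite (arrangement0 A).
have [B [s1 [s2 [eq_s fB mB A1 A2]]]] := arrangement_split_first A isT.
have [u [ru lu cu eq1]] :=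
  treeN1 a ((last_leaf B).+1 - a) B s1 ltac:(lia) A1 fB ltac:(lia).
have [cs [rcs lcs eq2]] :=
  forestN (last_leaf B).+1 (a + k.+1 - (last_leaf B).+1) s2 ltac:(lia) A2.
exists (u :: cs); split.
- by rewrite /= ru.
- by rewrite /= lu lcs iota_sub_cat ?addKn //; lia.
- rewrite perm_sym; apply: perm_trans eq_s _.
  by rewrite /forest_components /= /components cu perm_cons perm_sym perm_cat.
Qed.

Lemma arrangements_realize N : trees_realize N /\ forests_realize N.
Proof.
elim: N => [|N [treeN forestN]]; first by split.
have treeN1 := trees_realize_step treeN forestN.
by split=> //; apply: forests_realize_step.
Qed.

Lemma labels_root cs k : labels (LN (rcons cs (LL k))) = flatten (map labels cs) ++ [:: k].
Proof. by rewrite /= map_rcons -cats1 flatten_cat. Qed.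

Lemma phi_root t cs k : (lab t 1).1 = LN (rcons cs (LL k)) ->
  perm_eq (forest_components cs) (phi t).
Proof.
move=> Et; rewrite /phi Et size_rcons /= -cats1 take_size_cat // map_cat flatten_cat /= ?cats0.
by rewrite perm_sym perm_forest_components.
Qed.

Lemma nleaves_shape u : nleaves (shape u) = size (labels u).
Proof.
elim/ltree_nested_ind: u => // us IH /=; rewrite size_flatten /shape -map_comp.
by elim: IH => //= u us' -> _ ->.
Qed.

Lemma prime_tree_root cs w : prime_tree (shape (LN (rcons cs w))) =
  (2 <= size (labels (LN (rcons cs w)))) && (if w is LL _ then true else false).
Proof.
rewrite -nleaves_shape /prime_tree; congr andb; rewrite /= map_rcons.
by case: cs => [|c cs] /=; rewrite ?last_rcons; case: w.
Qed.

Lemma PST_shape_root n u : 0 < n -> labels u = iota 1 (size (labels u)) ->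
  PST n (shape u) <-> exists cs, [/\ u = LN (rcons cs (LL n.+1)), all lreduced cs
                                   & flatten (map labels cs) = iota 1 n].
Proof.
move=> n_gt0 lu; rewrite /PST reduced_shape /weight nleaves_shape; split; last first.
  move=> [cs [-> rcs lcs]]; rewrite prime_tree_root labels_root size_cat lcs size_iota.
  rewrite /= size_rcons all_rcons rcs addn1 /= !ltnS n_gt0 eqxx !andbT.
  by case: cs lcs {rcs} => // lcs; have := size_iota 1 n; rewrite -lcs /=; lia.
case: u lu => [j|us] lu; first by case/and3P.
case/lastP: us lu => [|cs w] lu; first by case/and3P.
rewrite prime_tree_root => /and3P [+ /andP [_ leaf_w] /eqP size_u].
case: w leaf_w lu size_u => // j _; rewrite labels_root => /cat_eq_iota [lcs [->]].
rewrite size_cat addn1 /= => <-; rewrite size_rcons all_rcons => /and3P [_ _ rcs].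
by exists cs; rewrite add1n.
Qed.

Lemma PST_lab_root n t : 0 < n -> PST n t ->
  exists cs, [/\ (lab t 1).1 = LN (rcons cs (LL n.+1)), all lreduced cs
               & flatten (map labels cs) = iota 1 n].
Proof.
move=> n_gt0; have [sh lb _] := lab_spec t 1; rewrite -{1}sh PST_shape_root //.
by rewrite lb size_iota.
Qed.

Theorem mainTheorem4 (n : nat) (hn : 1 <= n) :
  (forall t, PST n t -> inA n (phi t)) /\
  (forall t1 t2, PST n t1 -> PST n t2 -> perm_eq (phi t1) (phi t2) -> t1 = t2) /\
  (forall a, inA n a -> exists2 t, PST n t & perm_eq (phi t) a).
Proof.
have [_ arranged_forest] := components_arrangement.
split; [|split].
- move=> t /(PST_lab_root hn) [cs [Et rcs lcs]].
  exact: arrangement_perm (phi_root Et) (arranged_forest cs rcs 1 n lcs).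
- move=> t1 t2 /(PST_lab_root hn) [cs1 [E1 rcs1 lcs1]] /(PST_lab_root hn) [cs2 [E2 rcs2 lcs2]].
  move=> eq_phi; have eq_cs : cs1 = cs2.
    apply: components_injective.2 rcs1 _ _ _ _ rcs2 lcs1 lcs2 _.
    apply: perm_trans (phi_root E1) (perm_trans eq_phi _); rewrite perm_sym.
    exact: phi_root E2.
  by have [<- _ _] := lab_spec t1 1; have [<- _ _] := lab_spec t2 1; rewrite E1 E2 eq_cs.
move=> a Aa; have [cs [rcs lcs eq_a]] := (arrangements_realize n.+1).2 1 n a (ltnSn n) Aa.
set u := LN (rcons cs (LL n.+1)).
have lu : labels u = iota 1 (size (labels u)).
  by rewrite labels_root lcs size_cat size_iota iotaD.
have Lu : (lab (shape u) 1).1 = u by rewrite lab_shape.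
exists (shape u); first by apply/PST_shape_root => //; exists cs.
by apply: perm_trans eq_a; rewrite perm_sym; apply: phi_root Lu.
Qed.
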